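(* The Price by Removal Mechanism is budget balanced, and it assigns all the users of $\bigcup_{m\in M}\hat P(m)$.
   Context: Model: finite sets of users $P$ (costs $c(p)\ge0$), mediators $M$ (the sets $P(m)$ partition $P$), advertisers $A$ (public capacity $u(a)$, a positive integer, and value $v(a)\ge0$); each advertiser $a$ has $u(a)$ slots each of value $v(a)$; $B$ is the set of all slots. $\gamma\ge1$ satisfies $u(a)\le\gamma$ and $|P(m)|\le\gamma$ for all $a,m$. Costs/values are compared using a fixed tie-breaking rule making them all distinct. Canonical assignment $S_c(P',B')$: order slots of $B'$ by decreasing value $b_1,b_2,\dots$ and users of $P'$ by increasing cost $p_1,p_2,\dots$; include $(p_i,b_i)$ for $i\le\min\{|P'|,|B'|\}$ iff $v(b_i)>c(p_i)$; the user at location $i$ is $p_i$. Budget balanced means the total amount charged to advertisers is at least the total amount paid to mediators. Price by Removal Mechanism (on the reported data): (1) for each mediator $m$, if $|S_c(P\setminus P(m),B)|>4\gamma$, let $p_m$ be the user at location $|S_c(P\setminus P(m),B)|-4\gamma$ of $S_c(P\setminus P(m),B)$ and $c_m=c(p_m)$, else $c_m=-\infty$; (2) $\hat P(m)$ = users of $P(m)$ with cost less than $c_m$; (3) run a VCG auction whose items are the users of $\bigcup_m\hat P(m)$ and whose bidders are the advertisers (each valuing each of up to $u(a)$ items at $v(a)$) plus a dummy advertiser of value $\max_m c_m$ and capacity $\sum_m|\hat P(m)|$; (4) charge each non-dummy advertiser her VCG payment; (5) for each user $p$ assigned (to a non-dummy advertiser) by the VCG auction, pay $c_m$ to the mediator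 $m$ of $p$. *)

From mathcomp Require Import all_boot all_order all_algebra.
Set Implicit Arguments. Unset Strict Implicit. Unset Printing Implicit Defensive.
Import Order.TTheory GRing.Theory Num.Theory.
Local Open Scope ring_scope.

Section PriceByRemoval.
Variables (R : realFieldType) (P M A : finType).
(* c : costs of users; med p : the mediator of user p (so the sets
   P(m) = [set p | med p == m] partition P); u : capacities; v : values;
   gamma : the parameter gamma. *)
Variables (c : P -> R) (med : P -> M) (u : A -> nat) (v : A -> R) (gamma : nat).

(* Values of all slots B (advertiser a has u a slots of value v a),
   sorted by decreasing value. *)
Definition slot_vals : seq R :=
  sort (fun x y : R => y <= x) (flatten [seq nseq (u a) (v a) | a <- enum A]).

Definition sorted_users (Q : pred P) : seq P :=
  sort (fun p q => c p <= c q) [seq p <- enum P | Q p].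

(* |S_c(P', B)| : number of locations i <= min(|P'|,|B|) with v(b_i) > c(p_i). *)
Definition canon_size (Q : pred P) : nat :=
  count (fun pr : P * R => c pr.1 < pr.2) (zip (sorted_users Q) slot_vals).

(* The user at (1-indexed) location i of S_c(P', B). *)
Definition user_at (Q : pred P) (i : nat) : option P :=
  onth (sorted_users Q) i.-1.

(* Step (1): the threshold c_m; [None] encodes -infinity. *)
Definition threshold (m : M) : option R :=
  let Q := [pred p | med p != m] in
  let k := canon_size Q in
  if (4 * gamma < k)%N then omap c (user_at Q (k - 4 * gamma)) else None.

Definition lt_opt (x : R) (o : option R) : bool :=
  if o is Some y then x < y else false.

Definition hatP (m : M) : {set P} :=
  [set p | (med p == m) && lt_opt (c p) (threshold m)].

Definition items : {set P} := \bigcup_(m : M) hatP m.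

(* Value of the dummy advertiser: max_m c_m (costs are nonnegative, so the
   base value 0 is irrelevant whenever some c_m is finite; if all c_m are
   -infinity, the dummy has capacity 0). *)
Definition dummy_value : R := \big[Num.max/0]_(m : M) odflt 0 (threshold m).

(* Bidders: [Some a] for advertiser a, [None] for the dummy advertiser. *)
Definition bval (b : option A) : R := if b is Some a then v a else dummy_value.
Definition bcap (b : option A) : nat := if b is Some a then u a else #|items|.

(* An allocation maps each user to [None] (unassigned) or to a bidder. *)
Definition allocation := {ffun P -> option (option A)}.

Definition feasible (ok : pred (option A)) (x : allocation) : bool :=
  [forall p, if x p is Some b then (p \in items) && ok b else true] &&
  [forall b : option A, (#|[set p | x p == Some b]| <= bcap b)%N].

Definition welfare (x : allocation) : R :=
  \sum_(p : P) (if x p is Some b then bval b else 0).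

Definition welfare_others (a : A) (x : allocation) : R :=
  \sum_(p : P) (if x p is Some b then (if b == Some a then 0 else bval b) else 0).

Definition opt_welfare_without (a : A) : R :=
  \big[Num.max/0]_(y : allocation | feasible (fun b => b != Some a) y) welfare y.

Definition vcg_allocation (x : allocation) : Prop :=
  feasible predT x /\ forall y : allocation, feasible predT y -> welfare y <= welfare x.

Definition vcg_payment (x : allocation) (a : A) : R :=
  opt_welfare_without a - welfare_others a x.

Definition total_charged (x : allocation) : R := \sum_(a : A) vcg_payment x a.

(* Step (5): each user assigned to a non-dummy advertiser earns c_m for its
   mediator m (c_m is finite for such users). *)
Definition total_paid (x : allocation) : R :=
  \sum_(p : P | if x p is Some (Some _) then true else false)
     odflt 0 (threshold (med p)).

Definition budget_balanced (x : allocation) : Prop := total_paid x <= total_charged x.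

End PriceByRemoval.

From Pilot Require Import Defs.
From mathcomp Require Import all_boot all_order all_algebra.
From mathcomp Require Import zify.
Import Order.TTheory GRing.Theory Num.Theory.
Local Open Scope ring_scope.

Set Implicit Arguments. Unset Strict Implicit. Unset Printing Implicit Defensive.

(* Let D = max_m c_m be the dummy's value.  Budget balance: every mediator
   payment c_m is at most D, and after removing advertiser a, handing her users
   to the dummy is feasible, so her Clarke payment is at least D per user she
   receives.  Assignment: if c_m is the cost of the user at location
   k - 4 gamma of S_c(P \ P(m), B), then the k-th pair of that canonical
   assignment is matched, so at least k slots are worth more than c_m, while
   at most (k - 4 gamma - 1) + |P(m)| < k users cost less than c_m.  Taking m
   with c_m = D, the items (all cheaper than D) are fewer than the slots worth
   more than D; so an unassigned item could be moved to such a slot with spare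
   capacity, strictly raising the welfare of the VCG allocation. *)

Lemma count_nth_downclosed (T : Type) (x0 : T) (q : pred T) (r : seq T) :
    (forall i j, (i <= j < size r)%N -> q (nth x0 r j) -> q (nth x0 r i)) ->
  forall i, (i < count q r)%N -> q (nth x0 r i).
Proof.
move=> closed i; set f := find (predC q) r.
suff count_le_f : (count q r <= f)%N.
  by move=> /leq_trans/(_ count_le_f)/(before_find x0) /= /negbFE.
rewrite -(cat_take_drop f r) count_cat.
have -> : count q (drop f r) = 0%N.
  apply/eqP; rewrite -leqn0 leqNgt -has_count; apply/negP => /(has_nthP x0) [j].
  rewrite size_drop nth_drop => lt_j qy.
  have has_f : has (predC q) r by rewrite has_find; lia.
  by have := nth_find x0 has_f; rewrite /= (closed f (f + j)) //; lia.
by rewrite addn0 (leq_trans (count_size _ _)) // size_take_min geq_minl.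
Qed.

Lemma lt_count_sorted_ge (R : numDomainType) (s : seq R) (t : R) i :
    sorted (fun x y => y <= x) s -> (i < size s)%N -> t < nth 0 s i ->
  (i < count (fun x => (t < x)%R) s)%N.
Proof.
move=> s_sorted lt_i t_lt.
have nth_ge : {in [pred n | (n < size s)%N] &,
    {homo nth 0 s : k l / (k <= l)%N >-> l <= k}}.
  by apply: sorted_leq_nth => // y x z xy yz; apply: le_trans yz xy.
have all_gt : all (fun x => t < x) (take i.+1 s).
  apply/(all_nthP 0) => k; rewrite size_takel // => lt_k.
  by rewrite nth_take //; apply: lt_le_trans t_lt (nth_ge _ _ _ _ _); rewrite ?inE; lia.
rewrite -(cat_take_drop i.+1 s) count_cat.
by move: all_gt; rewrite all_count => /eqP->; rewrite size_takel // leq_addr.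
Qed.

Section PriceByRemovalProofs.
Variables (R : realFieldType) (P M A : finType).
Variables (c : P -> R) (med : P -> M) (u : A -> nat) (v : A -> R) (gamma : nat).

Local Notation sorted_users := (sorted_users c).
Local Notation slot_vals := (slot_vals u v).
Local Notation canon_size := (canon_size c u v).
Local Notation threshold := (threshold c med u v gamma).

Lemma nth_sorted_users_le (Q : pred P) p0 i j :
  (i <= j < size (sorted_users Q))%N ->
  c (nth p0 (sorted_users Q) i) <= c (nth p0 (sorted_users Q) j).
Proof.
move=> /andP[le_ij lt_j].
apply: (sorted_leq_nth (leT := fun p q => c p <= c q)); rewrite ?inE //; try lia.
- by move=> y x z; apply: le_trans.
- by apply: sort_sorted => p q; apply: le_total.
Qed.

Lemma slot_vals_sorted : sorted (fun x y : R => y <= x) slot_vals.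
Proof. by apply: sort_sorted => x y; apply: le_total. Qed.

Lemma nth_slot_vals_ge i j :
  (i <= j < size slot_vals)%N -> nth 0 slot_vals j <= nth 0 slot_vals i.
Proof.
move=> /andP[le_ij lt_j].
apply: (sorted_leq_nth (leT := fun x y : R => y <= x)); rewrite ?inE //; try lia.
- by move=> y x z xy yz; apply: le_trans yz xy.
- exact: slot_vals_sorted.
Qed.

Lemma canon_size_le Q :
  (canon_size Q <= minn (size (sorted_users Q)) (size slot_vals))%N.
Proof. by rewrite -size_zip; apply: count_size. Qed.

Lemma canon_pair_matched Q p0 i : (i < canon_size Q)%N ->
  c (nth p0 (sorted_users Q) i) < nth 0 slot_vals i.
Proof.
move=> lt_i; have := canon_size_le Q; rewrite leq_min => /andP[k_s k_sv].
set s := sorted_users Q in k_s *; set sv := slot_vals in k_sv *.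
have nth_z k : (k < size s)%N -> (k < size sv)%N ->
    nth (p0, 0) (zip s sv) k = (nth p0 s k, nth 0 sv k).
  by move=> ks ksv; rewrite nth_zip_cond size_zip leq_min ks ksv.
have := @count_nth_downclosed _ (p0, 0) (fun pr : P * R => c pr.1 < pr.2) (zip s sv).
move=> /(_ _ i lt_i); rewrite nth_z /=; [apply=> k l | lia | lia].
rewrite size_zip leq_min => /andP[le_kl /andP[l_s l_sv]].
rewrite !nth_z /=; [|lia..].
have le_c : c (nth p0 s k) <= c (nth p0 s l) by apply: nth_sorted_users_le; rewrite le_kl.
have le_sv : sv`_l <= sv`_k by apply: nth_slot_vals_ge; rewrite le_kl.
by move=> matched_l; apply: le_lt_trans le_c (lt_le_trans matched_l le_sv).
Qed.

Lemma count_slot_vals_gt t :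
  count (fun x => t < x) slot_vals = (\sum_(a | (t < v a)%R) u a)%N.
Proof.
rewrite /Defs.slot_vals (permP (permEl (perm_sort _ _))) count_flatten sumnE.
rewrite !big_map -enumT big_enum /= [RHS]big_mkcond /=.
by apply: eq_bigr => a _; rewrite count_nseq /=; case: (t < v a); rewrite ?mul1n ?mul0n.
Qed.

Lemma card_cost_lt_nth (Q : pred P) p0 j : (j < size (sorted_users Q))%N ->
  (#|[set q | (c q < c (nth p0 (sorted_users Q) j))%R]| <= j + #|[set q | ~~ Q q]|)%N.
Proof.
move=> lt_j.
have below : [set q | c q < c (nth p0 (sorted_users Q) j)] \subset
             [set q in take j (sorted_users Q)] :|: [set q | ~~ Q q].
  apply/subsetP => q; rewrite !inE => lt_q; case Qq: (Q q); rewrite ?orbT //= orbF.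
  have q_s : q \in sorted_users Q by rewrite mem_sort mem_filter Qq mem_enum.
  rewrite in_take // ltnNge; apply/negP => le_j.
  have := @nth_sorted_users_le Q p0 j (index q (sorted_users Q)).
  by rewrite le_j index_mem q_s nth_index // leNgt lt_q => /(_ isT).
apply: leq_trans (subset_leq_card below) _; apply: leq_trans (leq_card_setU _ _) _.
rewrite leq_add2r cardsE; apply: leq_trans (card_size _) _.
by rewrite size_take_min geq_minl.
Qed.

Lemma threshold_Some m t : threshold m = Some t ->
  exists j p0, (j + 4 * gamma).+1 = canon_size [pred q | med q != m] /\
               t = c (nth p0 (sorted_users [pred q | med q != m]) j).
Proof.
rewrite /Defs.threshold /user_at; case: ifP => // lt_k.
case E: onth => [p|] //= [<-]; exists (canon_size [pred q | med q != m] - 4 * gamma).-1, p.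
by split; [lia | rewrite (onth_nth p p _ _ E)].
Qed.

Lemma card_cost_lt_threshold m t :
  (#|[set p | med p == m]| <= gamma)%N -> threshold m = Some t ->
  (#|[set q | (c q < t)%R]| < \sum_(a | (t < v a)%R) u a)%N.
Proof.
move=> small_m /threshold_Some [j [p0 [k_eq ->]]].
set Q := [pred q | med q != m] in k_eq *.
have := canon_size_le Q; rewrite leq_min -k_eq => /andP[k_s k_sv].
have last_matched : c (nth p0 (sorted_users Q) (j + 4 * gamma)) <
    nth 0 slot_vals (j + 4 * gamma) by apply: canon_pair_matched; rewrite -k_eq.
have users_m : [set q | ~~ Q q] = [set p | med p == m].
  by apply/setP => q; rewrite !inE negbK.
apply: leq_ltn_trans (card_cost_lt_nth p0 (leq_ltn_trans (leq_addr _ _) k_s)) _.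
rewrite users_m -count_slot_vals_gt.
apply: leq_ltn_trans (_ : _ <= j + 4 * gamma)%N _; first lia.
apply: lt_count_sorted_ge k_sv _; first exact: slot_vals_sorted.
by apply: le_lt_trans last_matched; apply: nth_sorted_users_le; rewrite leq_addr.
Qed.

Local Notation items := (items c med u v gamma).
Local Notation dummy := (dummy_value c med u v gamma).
Local Notation feasible := (feasible c med u v gamma).
Local Notation welfare := (welfare c med u v gamma).

Lemma threshold_le_dummy m : odflt 0 (threshold m) <= dummy.
Proof. exact: le_bigmax. Qed.

Definition load (x : allocation P A) (a : A) : nat := #|[set q | x q == Some (Some a)]|.

Definition sold (x : allocation P A) : {set P} :=
  [set q | if x q is Some (Some _) then true else false].

Lemma sum_load x : (\sum_a load x a)%N = #|sold x|.
Proof.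
rewrite /load /sold -sum1dep_card [RHS]big_mkcond /=.
under eq_bigr => a _ do rewrite -sum1dep_card big_mkcond /=.
rewrite exchange_big; apply: eq_bigr => q _ /=.
case: (x q) => [[a1|]|]; [|by rewrite big1..].
rewrite (bigD1 a1) //= eqxx big1 // => a ne_a.
by case: eqP => // -[eq_a]; rewrite eq_a eqxx in ne_a.
Qed.

Lemma total_paid_le x : total_paid c med u v gamma x <= dummy *+ #|sold x|.
Proof.
rewrite -sumr_const (eq_bigl (fun p => if x p is Some (Some _) then true else false)).
  by apply: ler_sum => p _; apply: threshold_le_dummy.
by move=> p; rewrite inE.
Qed.

Definition to_dummy (x : allocation P A) (a : A) : allocation P A :=
  [ffun q => if x q == Some (Some a) then Some None else x q].

Lemma feasible_to_dummy x a :
  feasible predT x -> feasible (fun b => b != Some a) (to_dummy x a).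
Proof.
move=> /andP[/forallP x_items /forallP x_cap]; apply/andP; split; apply/forallP.
  move=> q; rewrite /to_dummy ffunE; have := x_items q.
  case: eqP => [->|]; first by case/andP => ->.
  by case: (x q) => // b ne_b /andP[-> _]; apply/eqP => eq_b; apply: ne_b; rewrite eq_b.
case=> [a'|] /=.
  apply: leq_trans (x_cap (Some a')); apply: subset_leq_card; apply/subsetP => q.
  by rewrite !inE /to_dummy ffunE; case: ifP.
apply: subset_leq_card; apply/subsetP => q; rewrite inE /to_dummy ffunE => /eqP to_None.
have := x_items q; case: eqP to_None => [-> _ /andP[] //|_ ->]; by case/andP.
Qed.

Lemma welfare_to_dummy x a :
  welfare (to_dummy x a) = welfare_others c med u v gamma a x + dummy *+ load x a.
Proof.
rewrite -sumr_const big_mkcond -big_split /=; apply: eq_bigr => q _.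
rewrite /to_dummy ffunE inE; case: eqP => [->|ne_a]; first by rewrite eqxx add0r.
by rewrite addr0; case: (x q) ne_a => // b ne_a; case: eqP => // eq_b; case: ne_a; rewrite eq_b.
Qed.

Lemma vcg_payment_ge x a :
  feasible predT x -> dummy *+ load x a <= vcg_payment c med u v gamma x a.
Proof.
move=> feas_x; rewrite /vcg_payment lerBrDl -welfare_to_dummy.
exact: le_bigmax_cond (feasible_to_dummy a feas_x).
Qed.

Lemma vcg_budget_balanced x : feasible predT x -> budget_balanced c med u v gamma x.
Proof.
move=> feas_x; apply: le_trans (total_paid_le x) _.
rewrite -sum_load -sumrMnr; apply: ler_sum => a _; exact: vcg_payment_ge.
Qed.

Lemma sold_subset_items x : feasible predT x -> sold x \subset items.
Proof.
move=> /andP[/forallP x_items _]; apply/subsetP => q; rewrite inE.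
by have := x_items q; case: (x q) => [[a|]|] // /andP[].
Qed.

Definition reassign (x : allocation P A) (p : P) (a : A) : allocation P A :=
  [ffun q => if q == p then Some (Some a) else x q].

Lemma feasible_reassign x p a : feasible predT x -> p \in items ->
  (load x a < u a)%N -> feasible predT (reassign x p a).
Proof.
move=> /andP[/forallP x_items /forallP x_cap] p_items free_a.
apply/andP; split; apply/forallP.
  by move=> q; rewrite /reassign ffunE; case: eqP => [->|_]; [rewrite p_items | apply: x_items].
move=> b; have [->|ne_b] := eqVneq b (Some a).
  have sub : [set q | reassign x p a q == Some (Some a)] \subset
             p |: [set q | x q == Some (Some a)].
    by apply/subsetP => q; rewrite !inE /reassign ffunE; case: (q =P p).
  apply: leq_trans (subset_leq_card sub) _; rewrite cardsU1.
  by apply: leq_trans (leq_add (leq_b1 _) (leqnn _)) free_a.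
apply: leq_trans (x_cap b); apply: subset_leq_card; apply/subsetP => q.
rewrite !inE /reassign ffunE; case: (q =P p) => // _ /eqP [eq_b].
by rewrite -eq_b eqxx in ne_b.
Qed.

Lemma welfare_reassign_gt (x : allocation P A) p a :
  (if x p is Some b then bval c med u v gamma b else 0) < v a ->
  welfare x < welfare (reassign x p a).
Proof.
move=> gain; rewrite /Defs.welfare (bigD1 p) //= [X in _ < X](bigD1 p) //=.
apply: ltr_leD; first by rewrite /reassign ffunE eqxx.
by apply: ler_sum => q ne_q; rewrite /reassign ffunE (negbTE ne_q) lexx.
Qed.

Section ItemsAreSold.
Hypothesis small_mediators : forall m, (#|[set p | med p == m]| <= gamma)%N.
Hypothesis costs_ge0 : forall p, 0 <= c p.

Lemma threshold_ge0 m : 0 <= odflt 0 (threshold m).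
Proof. by rewrite /Defs.threshold /user_at; case: ifP => // _; case: onth. Qed.

Lemma items_cost_lt_dummy q : q \in items -> c q < dummy.
Proof.
case/bigcupP => m _; rewrite inE => /andP[_].
have := threshold_le_dummy m; case: (threshold m) => [t|] //= le_t lt_t.
exact: lt_le_trans lt_t le_t.
Qed.

Lemma card_items_lt_slots p : p \in items ->
  (#|items| < \sum_(a | (dummy < v a)%R) u a)%N.
Proof.
move=> p_items; have dummy_gt0 : 0 < dummy.
  exact: le_lt_trans (costs_ge0 p) (items_cost_lt_dummy p_items).
have [m _ dummy_m] := eq_bigmax (med p) predT (fun m => odflt 0 (threshold m)) isT
  (fun m _ => threshold_ge0 m).
move: dummy_m; rewrite -/(dummy_value c med u v gamma).
case E: (threshold m) => [t|] /= dummy_t; last by rewrite dummy_t ltxx in dummy_gt0.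
rewrite dummy_t; apply: leq_ltn_trans (card_cost_lt_threshold (small_mediators m) E).
apply: subset_leq_card; apply/subsetP => q q_items; rewrite inE -dummy_t.
exact: items_cost_lt_dummy.
Qed.

Lemma vcg_sells_items x : vcg_allocation c med u v gamma x ->
  forall p, p \in items -> exists a, x p = Some (Some a).
Proof.
move=> [feas_x opt_x] p p_items.
have [|p_unsold] := boolP (p \in sold x).
  by rewrite inE; case: (x p) => [[a|]|] // _; exists a.
have [/existsP [a /andP[gt_a free_a]]|/existsPn full] :=
  boolP [exists a, (dummy < v a) && (load x a < u a)%N].
  suff : welfare x < welfare (reassign x p a).
    by rewrite ltNge opt_x // feasible_reassign.
  apply: welfare_reassign_gt; move: p_unsold; rewrite inE.
  by case: (x p) => [[]|] //= _; apply: le_lt_trans gt_a; apply: bigmax_ge_id.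
have sold_lt_items : (#|sold x| < #|items|)%N.
  apply: proper_card; rewrite properE sold_subset_items //.
  by apply/subsetPn; exists p.
suff slots_le_sold : (\sum_(a | (dummy < v a)%R) u a <= #|sold x|)%N.
  have := ltn_trans sold_lt_items (card_items_lt_slots p_items).
  by rewrite ltnNge slots_le_sold.
rewrite -sum_load [X in (_ <= X)%N](bigID (fun a => dummy < v a)) /=.
apply: (leq_trans _ (leq_addr _ _)); apply: leq_sum => a gt_a.
by have := full a; rewrite gt_a /= -leqNgt.
Qed.
End ItemsAreSold.
End PriceByRemovalProofs.

Theorem corollary7 (R : realFieldType) (P M A : finType)
    (c : P -> R) (med : P -> M) (u : A -> nat) (v : A -> R) (gamma : nat) :
  (1 <= gamma)%N ->
  (forall a, 0 < u a)%N ->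
  (forall a, u a <= gamma)%N ->
  (forall m, #|[set p | med p == m]| <= gamma)%N ->
  (forall p, 0 <= c p) ->
  (forall a, 0 <= v a) ->
  injective c -> injective v -> (forall a p, v a != c p) ->
  forall x : allocation P A,
    vcg_allocation c med u v gamma x ->
    budget_balanced c med u v gamma x /\
    (forall p, p \in items c med u v gamma ->
       exists a : A, x p = Some (Some a)).
Proof.
move=> _ _ _ small_mediators costs_ge0 _ _ _ _ x vcg_x; split.
  by apply: vcg_budget_balanced; case: vcg_x.
exact: vcg_sells_items.
Qed.
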